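(* For a (nondegenerate) triangle $AB\Gamma$, let $\ell_1$ be the line perpendicular to $AB$ through $B$, $\ell_2$ the line perpendicular to $B\Gamma$ through $\Gamma$, and $\ell_3$ the line perpendicular to $\Gamma A$ through $A$, and let $A'B'\Gamma'$ be the triangle bounded by these three lines. Let $E$ and $E'$ be the areas of $AB\Gamma$ and $A'B'\Gamma'$. Then, over all such pairs in which the triangles are right triangles, the minimum value of $E'/E$ is $4$, attained exactly when the triangles are isosceles right triangles. *)

From HB Require Import structures.
From mathcomp Require Import all_boot all_order all_algebra.
Set Implicit Arguments. Unset Strict Implicit. Unset Printing Implicit Defensive.
Import Order.TTheory GRing.Theory Num.Theory.
Local Open Scope ring_scope.

Section Geom.
Variable R : realFieldType.
Definition pt := (R * R)%type.

Definition vsub (p q : pt) : pt := (p.1 - q.1, p.2 - q.2).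
Definition dot (u v : pt) : R := u.1 * v.1 + u.2 * v.2.
Definition cross (u v : pt) : R := u.1 * v.2 - u.2 * v.1.

Definition area (A B C : pt) : R := `|cross (vsub B A) (vsub C A)| / 2.

Definition nondeg_triangle (A B C : pt) : Prop := cross (vsub B A) (vsub C A) != 0.

Definition on_perp_at (P Q X : pt) : Prop := dot (vsub X Q) (vsub Q P) = 0.

Definition right_at (V P Q : pt) : Prop := dot (vsub P V) (vsub Q V) = 0.

Definition right_triangle (A B C : pt) : Prop :=
  right_at A B C \/ right_at B C A \/ right_at C A B.

Definition isosceles_right_at (V P Q : pt) : Prop :=
  right_at V P Q /\ dot (vsub P V) (vsub P V) = dot (vsub Q V) (vsub Q V).

Definition isosceles_right_triangle (A B C : pt) : Prop :=
  isosceles_right_at A B C \/ isosceles_right_at B C A \/ isosceles_right_at C A B.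

(* P = l1 ∩ l2, Q = l2 ∩ l3, S = l3 ∩ l1
   are the vertices of the triangle bounded by l1, l2, l3. *)
Definition l1 (A B C X : pt) : Prop := on_perp_at A B X.
Definition l2 (A B C X : pt) : Prop := on_perp_at B C X.
Definition l3 (A B C X : pt) : Prop := on_perp_at C A X.

Definition perp_triangle (A B C P Q S : pt) : Prop :=
  [/\ l1 A B C P /\ l2 A B C P,
      l2 A B C Q /\ l3 A B C Q &
      l3 A B C S /\ l1 A B C S].
End Geom.

(* The three perpendiculars are computed by Cramer's rule; a direct calculation shows that,
   for any triangle with squared side lengths summing to s and (signed, doubled) area D,
   the bounded triangle has doubled area s^2 / (4 D), so E'/E = s^2 / (4 D^2).
   If the right angle has legs of squared lengths p and q, then s = 2 (p + q) and
   D^2 = p q, so E'/E = (p + q)^2 / (p q) >= 4 by AM-GM, with equality iff p = q. *)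
From mathcomp Require Import all_boot all_order all_algebra.
From mathcomp Require Import ring lra.
Import Order.TTheory GRing.Theory Num.Theory.
Local Open Scope ring_scope.

Set Implicit Arguments.

Section PerpTriangle.
Variable R : realFieldType.
Implicit Types (A B C P Q S V : pt R) (p q : R).

Lemma cramer2 {x y a1 a2 u1 u2 b1 b2 v1 v2 : R} :
  (x - a1) * u1 + (y - a2) * u2 = 0 ->
  (x - b1) * v1 + (y - b2) * v2 = 0 ->
  u1 * v2 - u2 * v1 != 0 ->
  x = ((a1 * u1 + a2 * u2) * v2 - (b1 * v1 + b2 * v2) * u2) / (u1 * v2 - u2 * v1) /\
  y = (u1 * (b1 * v1 + b2 * v2) - v1 * (a1 * u1 + a2 * u2)) / (u1 * v2 - u2 * v1).
Proof.
move=> Hu Hv nz; split; apply: (mulIf nz); rewrite mulfVK //;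
  apply/eqP; rewrite -subr_eq0; apply/eqP.
- transitivity (v2 * ((x - a1) * u1 + (y - a2) * u2) - u2 * ((x - b1) * v1 + (y - b2) * v2)).
    by ring.
  by rewrite Hu Hv; ring.
- transitivity (u1 * ((x - b1) * v1 + (y - b2) * v2) - v1 * ((x - a1) * u1 + (y - a2) * u2)).
    by ring.
  by rewrite Hu Hv; ring.
Qed.

Definition dbl_area A B C : R := cross (vsub B A) (vsub C A).

Definition sum_sq_sides A B C : R :=
  dot (vsub B A) (vsub B A) + dot (vsub C B) (vsub C B) + dot (vsub A C) (vsub A C).

Definition perp_area_ratio A B C : R :=
  sum_sq_sides A B C ^+ 2 / (4 * dbl_area A B C ^+ 2).

Lemma dbl_area_perp_triangle A B C P Q S :
  nondeg_triangle A B C -> perp_triangle A B C P Q S ->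
  dbl_area P Q S = sum_sq_sides A B C ^+ 2 / (4 * dbl_area A B C).
Proof.
case: A => a1 a2; case: B => b1 b2; case: C => c1 c2.
case: P => p1 p2; case: Q => q1 q2; case: S => s1 s2.
rewrite /nondeg_triangle /perp_triangle /l1 /l2 /l3 /on_perp_at.
rewrite /dbl_area /sum_sq_sides /dot /vsub /cross /=.
set D := (b1 - a1) * (c2 - a2) - (b2 - a2) * (c1 - a1) => nzD.
move=> [[HP1 HP2] [HQ1 HQ2] [HS1 HS2]].
(* Each pair of perpendiculars has determinant D, so they meet in a single point. *)
have nzP : (b1 - a1) * (c2 - b2) - (b2 - a2) * (c1 - b1) != 0.
  by have -> : (b1 - a1) * (c2 - b2) - (b2 - a2) * (c1 - b1) = D by rewrite /D; ring.
have nzQ : (c1 - b1) * (a2 - c2) - (c2 - b2) * (a1 - c1) != 0.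
  by have -> : (c1 - b1) * (a2 - c2) - (c2 - b2) * (a1 - c1) = D by rewrite /D; ring.
have nzS : (a1 - c1) * (b2 - a2) - (a2 - c2) * (b1 - a1) != 0.
  by have -> : (a1 - c1) * (b2 - a2) - (a2 - c2) * (b1 - a1) = D by rewrite /D; ring.
have [-> ->] := cramer2 HP1 HP2 nzP.
have [-> ->] := cramer2 HQ1 HQ2 nzQ.
have [-> ->] := cramer2 HS1 HS2 nzS.
by rewrite /D; field.
Qed.

Lemma area_ratio_perp_triangle A B C P Q S :
  nondeg_triangle A B C -> perp_triangle A B C P Q S ->
  area P Q S / area A B C = perp_area_ratio A B C.
Proof.
move=> nd hP; rewrite /area -/(dbl_area P Q S) -/(dbl_area A B C).
rewrite (dbl_area_perp_triangle nd hP) /perp_area_ratio.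
have nzD : `|dbl_area A B C| != 0 by rewrite normr_eq0.
rewrite -(real_normK (num_real (dbl_area A B C))) normf_div (ger0_norm (sqr_ge0 _)).
by rewrite normrM (@ger0_norm _ 4) //; field.
Qed.

Lemma perp_area_ratio_rot A B C : perp_area_ratio A B C = perp_area_ratio B C A.
Proof.
case: A => a1 a2; case: B => b1 b2; case: C => c1 c2.
by rewrite /perp_area_ratio /sum_sq_sides /dbl_area /dot /cross /vsub /=;
  congr (_ / (4 * _ ^+ 2)); ring.
Qed.

Lemma perp_area_ratio_rot2 A B C : perp_area_ratio A B C = perp_area_ratio C A B.
Proof. by rewrite 2!perp_area_ratio_rot. Qed.

Lemma nondeg_triangle_rot A B C : nondeg_triangle A B C -> nondeg_triangle B C A.
Proof.
case: A => a1 a2; case: B => b1 b2; case: C => c1 c2.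
rewrite /nondeg_triangle /cross /vsub /=.
suff -> : (c1 - b1) * (a2 - b2) - (c2 - b2) * (a1 - b1)
        = (b1 - a1) * (c2 - a2) - (b2 - a2) * (c1 - a1) by [].
by ring.
Qed.

Lemma lagrange_identity (u v : pt R) :
  cross u v ^+ 2 + dot u v ^+ 2 = dot u u * dot v v.
Proof. by rewrite /cross /dot; ring. Qed.

Lemma sum_sq_sides_at V P Q :
  sum_sq_sides V P Q = 2 * (dot (vsub P V) (vsub P V) + dot (vsub Q V) (vsub Q V))
                       - 2 * dot (vsub P V) (vsub Q V).
Proof.
case: V => v1 v2; case: P => p1 p2; case: Q => q1 q2.
by rewrite /sum_sq_sides /dot /vsub /=; ring.
Qed.

Lemma perp_area_ratio_right_at V P Q : right_at V P Q ->
  dbl_area V P Q ^+ 2 = dot (vsub P V) (vsub P V) * dot (vsub Q V) (vsub Q V) /\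
  perp_area_ratio V P Q = (dot (vsub P V) (vsub P V) + dot (vsub Q V) (vsub Q V)) ^+ 2
                          / (dot (vsub P V) (vsub P V) * dot (vsub Q V) (vsub Q V)).
Proof.
rewrite /right_at => r0.
have area2 : dbl_area V P Q ^+ 2 = dot (vsub P V) (vsub P V) * dot (vsub Q V) (vsub Q V).
  by rewrite -lagrange_identity r0 expr0n addr0.
split=> //; rewrite /perp_area_ratio area2 sum_sq_sides_at r0 mulr0 subr0.
by rewrite exprMn -mulf_div (_ : 2 ^+ 2 / 4 = 1) ?mul1r //; field.
Qed.

Lemma amgm_ratio_ge4 p q : 0 < p * q -> 4 <= (p + q) ^+ 2 / (p * q).
Proof. by move=> pq0; rewrite ler_pdivlMr //; have := sqr_ge0 (p - q); nra. Qed.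

Lemma amgm_ratio_eq4 p q : 0 < p * q -> ((p + q) ^+ 2 / (p * q) = 4 <-> p = q).
Proof.
move=> pq0; have nz : p * q != 0 by rewrite lt0r_neq0.
split=> [/(canRL (mulfVK nz)) /eqP | ->].
  rewrite -subr_eq0 (_ : _ - _ = (p - q) ^+ 2); last by ring.
  by rewrite sqrf_eq0 subr_eq0 => /eqP.
have q0 : q != 0 by apply: contraNneq nz => ->; rewrite mulr0.
by field.
Qed.

Lemma perp_area_ratio_right_at_min V P Q : nondeg_triangle V P Q -> right_at V P Q ->
  4 <= perp_area_ratio V P Q /\ (perp_area_ratio V P Q = 4 <-> isosceles_right_at V P Q).
Proof.
move=> nd rt; have [area2 ->] := perp_area_ratio_right_at rt.
have pq_gt0 : 0 < dot (vsub P V) (vsub P V) * dot (vsub Q V) (vsub Q V).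
  by rewrite -area2 lt_def sqrf_eq0 nd sqr_ge0.
split; first exact: amgm_ratio_ge4.
rewrite amgm_ratio_eq4 //; split=> [|[]//]; exact: conj.
Qed.

Lemma perp_area_ratio_isosceles A B C :
  nondeg_triangle A B C -> isosceles_right_triangle A B C -> perp_area_ratio A B C = 4.
Proof.
move=> ndA; have ndB := nondeg_triangle_rot ndA; have ndC := nondeg_triangle_rot ndB.
case=> [h | [h | h]];
  [| rewrite perp_area_ratio_rot | rewrite perp_area_ratio_rot2];
  exact/(perp_area_ratio_right_at_min _ h.1).2.
Qed.

Lemma perp_area_ratio_right_min A B C : nondeg_triangle A B C -> right_triangle A B C ->
  4 <= perp_area_ratio A B C /\
  (perp_area_ratio A B C = 4 <-> isosceles_right_triangle A B C).
Proof.
move=> ndA rt; have ndB := nondeg_triangle_rot ndA; have ndC := nondeg_triangle_rot ndB.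
suff [ge4 eq4_iso] : 4 <= perp_area_ratio A B C /\
                     (perp_area_ratio A B C = 4 -> isosceles_right_triangle A B C).
  by split=> //; split=> //; apply: perp_area_ratio_isosceles.
case: rt => [rt | [rt | rt]].
- have [ge4 eq4] := perp_area_ratio_right_at_min ndA rt.
  by split=> // /eq4; left.
- rewrite perp_area_ratio_rot; have [ge4 eq4] := perp_area_ratio_right_at_min ndB rt.
  by split=> // /eq4; right; left.
- rewrite perp_area_ratio_rot2; have [ge4 eq4] := perp_area_ratio_right_at_min ndC rt.
  by split=> // /eq4; right; right.
Qed.
End PerpTriangle.

Theorem mainTheorem3 (R : realFieldType) :
  (forall A B C P Q S : pt R,
      nondeg_triangle A B C -> right_triangle A B C -> perp_triangle A B C P Q S ->
      4 <= area P Q S / area A B C)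
  /\
  (forall A B C P Q S : pt R,
      nondeg_triangle A B C -> right_triangle A B C -> perp_triangle A B C P Q S ->
      (area P Q S / area A B C = 4 <-> isosceles_right_triangle A B C))
  /\
  (exists A B C P Q S : pt R,
      [/\ nondeg_triangle A B C, right_triangle A B C, perp_triangle A B C P Q S &
          area P Q S / area A B C = 4]).
Proof.
split; [|split].
- move=> A B C P Q S nd rt hP; rewrite area_ratio_perp_triangle //.
  exact: (perp_area_ratio_right_min nd rt).1.
- move=> A B C P Q S nd rt hP; rewrite area_ratio_perp_triangle //.
  exact: (perp_area_ratio_right_min nd rt).2.
pose A : pt R := (0, 0); pose B : pt R := (1, 0); pose C : pt R := (0, 1).
have nd : nondeg_triangle A B C by rewrite /nondeg_triangle /cross /vsub /= !subr0 mulr1 mulr0 subr0 oner_neq0.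
have iso : isosceles_right_at A B C by rewrite /isosceles_right_at /right_at /dot /vsub /=; split; ring.
have hP : perp_triangle A B C (1, 2) (-1, 0) (1, 0).
  by rewrite /perp_triangle /l1 /l2 /l3 /on_perp_at /dot /vsub /=; split; split; ring.
exists A, B, C, (1, 2), (-1, 0), (1, 0); split=> //; first by left; case: iso.
by rewrite area_ratio_perp_triangle //; apply: perp_area_ratio_isosceles => //; left.
Qed.
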